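(* Let $P$ and $\mathcal{R}$ be as below, $R\in\mathcal{R}$, and let $p$ be the point of $P\cap R$ with the largest $x$-coordinate. Then $\textsc{Piece}(R,p)$ consists of a single slab; that is, neither $\textsc{Upb}(R,p)$ nor $\textsc{Lpb}(R,p)$ exists, so $\textsc{Slab}(R,p)=\textsc{Piece}(R,p)$.
   Context: $P$ is a finite point set and $\mathcal{R}$ a finite family of non-piercing axis-parallel rectangles (for any $R_1,R_2$, $R_1\setminus R_2$ connected), in general position (distinct coordinates, no point on a rectangle boundary). For a rectangle $R'$ write $y_\pm(R')$ for the $y$-coordinates of its upper/lower sides. A set $S$ discretely pierces a rectangle $R'$ if $R'\setminus S$ has two components each containing a point of $P$. Let $\ell_p$ be the vertical line through $p$. $\textsc{Active}(p)$ is the set of rectangles of $\mathcal{R}$ discretely pierced by $\ell_p$ or containing $p$; $\textsc{Above}(p)=\{R'\in\textsc{Active}(p):y_-(R')>y(p)\}$, $\textsc{Below}(p)=\{R'\in\textsc{Active}(p):y_+(R')<y(p)\}$. $\textsc{Piece}(R,p)=R\cap\{x\le x(p)\}$. $\textsc{Upb}(R,p)$ is the rectangle of $\textsc{Above}(p)$ discretely pierced by $\textsc{Piece}(R,p)$ with smallest $y_+$, and $\textsc{Lpb}(R,p)$ the rectangle of $\textsc{Below}(p)$ discretely pierced by $\textsc{Piece}(R,p)$ with largest $y_-$, if such rectangles exist. The horizontal lines $y=y_+(\textsc{Upb}(R,p))$ and $y=y_-(\textsc{Lpb}(R,p))$ (when these exist) split $\textsc{Piece}(R,p)$ into at most three slabs;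 $\textsc{Slab}(R,p)$ is the one containing $p$. *)

From HB Require Import structures.
From mathcomp Require Import all_boot all_order all_algebra.
From mathcomp Require Import all_classical all_reals all_analysis.
Set Implicit Arguments. Unset Strict Implicit. Unset Printing Implicit Defensive.
Import Order.TTheory GRing.Theory Num.Theory.
Import numFieldNormedType.Exports.
Local Open Scope classical_set_scope.
Local Open Scope ring_scope.

Definition rect (R : realType) := ((R * R) * (R * R))%type.
Definition xl (R : realType) (Q : rect R) : R := Q.1.1.
Definition xr (R : realType) (Q : rect R) : R := Q.1.2.
Definition yl (R : realType) (Q : rect R) : R := Q.2.1.
Definition yr (R : realType) (Q : rect R) : R := Q.2.2.

Section Defs.
Variable R : realType.
Notation pt := (R * R)%type.

Definition rect_set (Q : rect R) : set pt :=
  [set z | xl Q <= z.1 <= xr Q /\ yl Q <= z.2 <= yr Q].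

Definition yplus (Q : rect R) := yr Q.
Definition yminus (Q : rect R) := yl Q.

Definition non_piercing (F : seq (rect R)) : Prop :=
  forall Q1 Q2, Q1 \in F -> Q2 \in F -> connected (rect_set Q1 `\` rect_set Q2).

Definition general_position (P : seq pt) (F : seq (rect R)) : Prop :=
  [/\ forall Q, Q \in F -> xl Q < xr Q /\ yl Q < yr Q,
      forall p q, p \in P -> q \in P -> p != q -> p.1 != q.1 /\ p.2 != q.2,
      forall p Q, p \in P -> Q \in F ->
        [/\ p.1 != xl Q, p.1 != xr Q, p.2 != yl Q & p.2 != yr Q]
    & forall Q1 Q2, Q1 \in F -> Q2 \in F -> Q1 != Q2 ->
        [/\ xl Q1 \notin [:: xl Q2; xr Q2], xr Q1 \notin [:: xl Q2; xr Q2],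
            yl Q1 \notin [:: yl Q2; yr Q2] & yr Q1 \notin [:: yl Q2; yr Q2]]].

Definition dpierces (P : seq pt) (S : set pt) (Q' : rect R) : Prop :=
  let A := rect_set Q' `\` S in
  exists q1 q2, [/\ q1 \in P, q2 \in P, A q1, A q2 &
   (connected_component A q1 != connected_component A q2 /\
    forall z, A z -> connected_component A z = connected_component A q1 \/
                     connected_component A z = connected_component A q2)].

Definition vline (p : pt) : set pt := [set z | z.1 = p.1].

Definition Active (P : seq pt) (F : seq (rect R)) (p : pt) (Q' : rect R) : Prop :=
  Q' \in F /\ (dpierces P (vline p) Q' \/ rect_set Q' p).

Definition Above P F p Q' := Active P F p Q' /\ yminus Q' > p.2.
Definition Below P F p Q' := Active P F p Q' /\ yplus Q' < p.2.

Definition Piece (Q : rect R) (p : pt) : set pt :=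
  rect_set Q `&` [set z | z.1 <= p.1].

(* Upb(Q,p) exists iff some rectangle of Above(p) is discretely pierced by
   Piece(Q,p) (it is then the one with smallest y_+); similarly for Lpb. *)
Definition Upb_exists P F Q p :=
  exists Q', Above P F p Q' /\ dpierces P (Piece Q p) Q'.
Definition Lpb_exists P F Q p :=
  exists Q', Below P F p Q' /\ dpierces P (Piece Q p) Q'.

End Defs.

From HB Require Import structures.
From mathcomp Require Import all_boot all_order all_algebra.
From mathcomp Require Import all_classical all_reals all_analysis.
Import Order.TTheory GRing.Theory Num.Theory.
Import numFieldNormedType.Exports.
Local Open Scope classical_set_scope.
Local Open Scope ring_scope.

(* Since p is the rightmost point of P in R, a point of P that lies in R' but
   not in Piece(R,p) also avoids R.  So all such points lie in R' \ R, which is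
   connected by non-piercing and contained in R' \ Piece(R,p); hence they fall
   into a single component of R' \ Piece(R,p), and Piece(R,p) discretely
   pierces no rectangle of the family. *)

Section NoDiscretePiercing.
Variable R : realType.
Implicit Types (P : seq (R * R)) (F : seq (rect R)) (Q : rect R) (p : R * R).

Lemma connected_cover_not_dpierces P (S C : set (R * R)) Q' :
  connected C -> C `<=` rect_set Q' `\` S ->
  (forall q, q \in P -> (rect_set Q' `\` S) q -> C q) ->
  ~ dpierces P S Q'.
Proof.
move=> Cconn CA PC [q1 [q2 [Pq1 Pq2 Aq1 Aq2 [neq_comp _]]]].
have q1_comp := connected_component_max (PC _ Pq1 Aq1) CA Cconn.
move/eqP: neq_comp; apply; apply: same_connected_component.
exact/q1_comp/PC.
Qed.

Lemma rightmost_rect_sub_Piece P Q p q :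
  (forall q, q \in P -> rect_set Q q -> q.1 <= p.1) ->
  q \in P -> rect_set Q q -> Piece Q p q.
Proof. by move=> rightmost Pq Qq; split => //; exact: rightmost. Qed.

Lemma Piece_not_dpierces P F Q Q' p :
  non_piercing F -> Q \in F -> Q' \in F ->
  (forall q, q \in P -> rect_set Q q -> q.1 <= p.1) ->
  ~ dpierces P (Piece Q p) Q'.
Proof.
move=> np QF Q'F rightmost.
apply: (@connected_cover_not_dpierces P _ (rect_set Q' `\` rect_set Q)).
- exact: np.
- by move=> z [Q'z notQz]; split => // -[].
- move=> q Pq [Q'q notPiece]; split => // Qq.
  by apply: notPiece; exact: rightmost_rect_sub_Piece rightmost Pq Qq.
Qed.

End NoDiscretePiercing.

Theorem lemma7 (R : realType) (P : seq (R * R)%type) (F : seq (rect R))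
  (Q : rect R) (p : (R * R)%type) :
  non_piercing F -> general_position P F ->
  Q \in F -> p \in P -> rect_set Q p ->
  (forall q, q \in P -> rect_set Q q -> q.1 <= p.1) ->
  ~ Upb_exists P F Q p /\ ~ Lpb_exists P F Q p.
Proof.
move=> np _ QF _ _ rightmost.
have no_dpierce Q' : Q' \in F -> ~ dpierces P (Piece Q p) Q'.
  by move=> Q'F; exact: Piece_not_dpierces np QF Q'F rightmost.
by split; move=> [Q' [[[Q'F _] _] dp]]; exact: no_dpierce Q'F dp.
Qed.
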